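(* Let $n\in\{2,3\}$ and $f\in\mathfrak{F}_{sc}$. For every density matrix $\rho$ on $\mathbb{C}^n$ with diagonal entries $\rho_{11},\dots,\rho_{nn}$ in the reference basis, $$\max_{\mathfrak{D}}\bar C_f(\mathfrak{D})=f(\rho_{11},\dots,\rho_{nn}),$$ where the maximum is over all pure state decompositions $\mathfrak{D}$ of $\rho$ (and is attained).
   Context: Fix the reference orthonormal basis $\{|i\rangle\}_{i=1}^n$ of $\mathbb{C}^n$. Let $\Omega$ be the probability simplex in $\mathbb{R}^n$. $\mathfrak{F}_{sc}$ denotes the set of functions $f:\Omega\to\mathbb{R}$ such that (i) $f((1,0,\dots,0)^T)=0$; (ii) $f(P\mathbf{x})=f(\mathbf{x})$ for every permutation matrix $P$; (iii) $f$ is concave. For a unit vector $|\psi\rangle=\sum_i\psi_i|i\rangle$, $C_f(|\psi\rangle)=f(|\psi_1|^2,\dots,|\psi_n|^2)$. A pure state decomposition of $\rho$ is a finite family $\{p_k,|\psi_k\rangle\}$ with $p_k>0$, $\sum_kp_k=1$, unit vectors $|\psi_k\rangle$ and $\rho=\sum_kp_k|\psi_k\rangle\langle\psi_k|$; its average coherence is $\bar C_f(\mathfrak{D})=\sum_kp_kC_f(|\psi_k\rangle)$. *)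

From HB Require Import structures.
From mathcomp Require Import all_boot all_order all_algebra.
From mathcomp Require Import fingroup perm.
From mathcomp Require Import complex.
From mathcomp Require Import reals.
Set Implicit Arguments. Unset Strict Implicit. Unset Printing Implicit Defensive.
Import Order.TTheory GRing.Theory Num.Theory.
Local Open Scope ring_scope.
Local Open Scope complex_scope.

Section Defs.
Variable R : realType.
Local Notation C := (R[i]).

Definition sqmod (z : C) : R := (complex.Re z) ^+ 2 + (complex.Im z) ^+ 2.

Definition in_simplex (n : nat) (x : 'rV[R]_n) : Prop :=
  (forall i, 0 <= x ord0 i) /\ \sum_(i < n) x ord0 i = 1.

Definition e_first (n : nat) : 'rV[R]_n := \row_(i < n) ((nat_of_ord i == 0%N)%:R).

(* the class F_sc: f : Omega -> R, given as a function on R^n whose values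
   outside Omega are irrelevant *)
Definition F_sc (n : nat) (f : 'rV[R]_n -> R) : Prop :=
  f (e_first n) = 0
  /\ (forall (s : 'S_n) (x : 'rV[R]_n), in_simplex x ->
        f (col_perm s x) = f x)
  /\ (forall (x y : 'rV[R]_n) (t : R), in_simplex x -> in_simplex y ->
        0 <= t <= 1 ->
        t * f x + (1 - t) * f y <= f (t *: x + (1 - t) *: y)).

Definition adjmx (m k : nat) (A : 'M[C]_(m, k)) : 'M[C]_(k, m) :=
  (map_mx conjc A)^T.

Definition density_matrix (n : nat) (rho : 'M[C]_n) : Prop :=
  adjmx rho = rho
  /\ (forall v : 'cV[C]_n, 0 <= (adjmx v *m rho *m v) ord0 ord0)
  /\ \tr rho = 1.

Definition unit_vector (n : nat) (psi : 'cV[C]_n) : Prop :=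
  \sum_(i < n) sqmod (psi i ord0) = 1.

Definition pure_decomposition (n m : nat) (rho : 'M[C]_n)
    (p : 'I_m -> R) (psi : 'I_m -> 'cV[C]_n) : Prop :=
  (forall k, 0 < p k) /\ \sum_(k < m) p k = 1
  /\ (forall k, unit_vector (psi k))
  /\ rho = \sum_(k < m) ((p k)%:C *: (psi k *m adjmx (psi k))).

Definition coh (n : nat) (f : 'rV[R]_n -> R) (psi : 'cV[C]_n) : R :=
  f (\row_(i < n) sqmod (psi i ord0)).

Definition avg_coh (n m : nat) (f : 'rV[R]_n -> R)
    (p : 'I_m -> R) (psi : 'I_m -> 'cV[C]_n) : R :=
  \sum_(k < m) p k * coh f (psi k).

Definition diag_vec (n : nat) (rho : 'M[C]_n) : 'rV[R]_n :=
  \row_(i < n) complex.Re (rho i i).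

End Defs.

From HB Require Import structures.
From mathcomp Require Import all_boot all_order all_algebra.
From mathcomp Require Import complex reals.
From mathcomp Require Import ring lra.
Import Order.TTheory GRing.Theory Num.Theory.
Local Open Scope ring_scope.
Local Open Scope complex_scope.
Set Implicit Arguments. Unset Strict Implicit. Unset Printing Implicit Defensive.

(* By concavity of f (Jensen), no pure state decomposition of rho beats
   f(rho_11, ..., rho_nn), because the diagonal of rho is the p-average of the
   vectors (|psi_k,i|^2)_i.  Equality holds for any decomposition all of whose
   states satisfy |psi_k,i|^2 = rho_ii.  Writing rho = D G D with
   D = diag(sqrt rho_ii) and G a correlation matrix (positive semidefinite,
   unit diagonal), such a decomposition exists as soon as G is a convex
   combination of matrices x x^* with unimodular entries.  For n = 2 this is
   the convexity of the unit disk.  For n = 3 write G_12 = a, G_13 = p + q a,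
   G_23 = p a^* + q and split a along a chord of the unit circle in a direction
   e with Re(p^* q e) = 0: positivity of G keeps |p + q w| <= 1 at both
   endpoints w of the chord, so each piece is again a convex combination of
   unimodular rank-one matrices. *)

Section Coherence.
Variable R : realType.
Local Notation C := R[i].

Lemma Re_sum m (F : 'I_m -> C) :
  complex.Re (\sum_(k < m) F k) = \sum_(k < m) complex.Re (F k).
Proof. exact: (raddf_sum (@complex.Re R : Rcomplex R -> R)). Qed.

Lemma sqmod_ge0 (z : C) : 0 <= sqmod z.
Proof. by rewrite /sqmod addr_ge0 ?sqr_ge0. Qed.

Lemma sqmod_eq0 (z : C) : sqmod z = 0 -> z = 0.
Proof.
case: z => a b; rewrite /sqmod /= => ab0.
have a0 : a = 0 by nra.
have b0 : b = 0 by nra.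
by rewrite a0 b0.
Qed.

Lemma sqmod_realM (r : R) (z : C) : sqmod (r%:C * z) = r ^+ 2 * sqmod z.
Proof. by case: z => ? ?; rewrite /sqmod; simpc; rewrite /=; ring. Qed.

Lemma sqmod_conj (z : C) : sqmod z^* = sqmod z.
Proof. by case: z => ? ?; rewrite /sqmod /=; ring. Qed.

Lemma sqmod_real (r : R) : sqmod r%:C = r ^+ 2.
Proof. by rewrite /sqmod /=; ring. Qed.

Lemma mulcJ_sqmod (z : C) : z * z^* = (sqmod z)%:C.
Proof.
case: z => a b; rewrite /sqmod /=.
by apply/eqP; rewrite eq_complex /=; apply/andP; split; apply/eqP; ring.
Qed.

Lemma conjc_comb (r1 r2 : R) (z1 z2 : C) :
  (r1%:C * z1 + r2%:C * z2)^* = r1%:C * z1^* + r2%:C * z2^*.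
Proof. by case: z1 z2 => ? ? [? ?]; simpc. Qed.

Lemma real_comb1 (t : R) (z : C) : t%:C * z + (1 - t)%:C * z = z.
Proof. by rewrite -mulrDl -rmorphD addrC subrK mul1r. Qed.

(** * The upper bound *)

Lemma in_simplex_convex_sum n m (p : 'I_m -> R) (x : 'I_m -> 'rV[R]_n) :
  (forall k, 0 <= p k) -> \sum_k p k = 1 -> (forall k, in_simplex (x k)) ->
  in_simplex (\sum_k p k *: x k).
Proof.
move=> p_ge0 p_sum x_simplex; split.
  move=> i; rewrite summxE sumr_ge0 // => k _; rewrite mxE mulr_ge0 //.
  by case: (x_simplex k).
under eq_bigr do rewrite summxE.
rewrite exchange_big /= -[RHS]p_sum; apply: eq_bigr => k _.
under eq_bigr do rewrite mxE.
by rewrite -mulr_sumr; case: (x_simplex k) => _ ->; rewrite mulr1.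
Qed.

Lemma concave_jensen n (f : 'rV[R]_n -> R)
    (f_concave : forall (x y : 'rV[R]_n) (t : R), in_simplex x -> in_simplex y ->
       0 <= t <= 1 -> t * f x + (1 - t) * f y <= f (t *: x + (1 - t) *: y))
    m (p : 'I_m -> R) (x : 'I_m -> 'rV[R]_n) :
  (forall k, 0 <= p k) -> \sum_k p k = 1 -> (forall k, in_simplex (x k)) ->
  \sum_k p k * f (x k) <= f (\sum_k p k *: x k).
Proof.
elim: m p x => [|m IH] p x p_ge0 p_sum x_simplex.
  by move: p_sum; rewrite big_ord0 => /eqP; rewrite eq_sym oner_eq0.
move: p_sum; rewrite !big_ord_recl; set S := \sum_(i < m) _ => p_sum.
have S_ge0 : 0 <= S by rewrite sumr_ge0.
have [S0|S_neq0] := eqVneq S 0.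
  have p_lift0 i : p (lift ord0 i) = 0 by move/psumr_eq0P: S0; apply.
  rewrite [X in _ + X <= _]big1 => [|i _]; last by rewrite p_lift0 mul0r.
  rewrite [X in _ <= f (_ + X)]big1 => [|i _]; last by rewrite p_lift0 scale0r.
  by rewrite !addr0 (_ : p ord0 = 1) ?mul1r ?scale1r // -p_sum S0 addr0.
pose q i := p (lift ord0 i) / S.
have q_ge0 i : 0 <= q i by rewrite divr_ge0.
have q_sum : \sum_i q i = 1 by rewrite -mulr_suml divff.
have S_eq : S = 1 - p ord0 by lra.
have p0_01 : 0 <= p ord0 <= 1 by rewrite p_ge0 -p_sum lerDl.
have -> : \sum_(i < m) p (lift ord0 i) *: x (lift ord0 i)
        = (1 - p ord0) *: \sum_i q i *: x (lift ord0 i).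
  rewrite -S_eq scaler_sumr; apply: eq_bigr => i _.
  by rewrite scalerA /q mulrCA divff ?mulr1.
have -> : \sum_(i < m) p (lift ord0 i) * f (x (lift ord0 i))
        = (1 - p ord0) * \sum_i q i * f (x (lift ord0 i)).
  rewrite -S_eq mulr_sumr; apply: eq_bigr => i _.
  by rewrite mulrA /q mulrCA divff ?mulr1.
apply: le_trans (f_concave _ _ _ (x_simplex ord0) _ p0_01); last first.
  exact: in_simplex_convex_sum.
rewrite lerD2l ler_wpM2l ?subr_ge0 ?IH //; by case/andP: p0_01.
Qed.

Lemma diag_vec_pure_decomposition n (rho : 'M[C]_n) m (p : 'I_m -> R) psi :
  pure_decomposition rho p psi ->
  diag_vec rho = \sum_k p k *: \row_(i < n) sqmod (psi k i ord0).
Proof.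
case=> _ [_ [_ ->]]; apply/matrixP => i j; rewrite !mxE !summxE Re_sum.
apply: eq_bigr => k _; rewrite !mxE big_ord1 !mxE mulcJ_sqmod /=.
by rewrite mul0r subr0.
Qed.

Lemma avg_coh_le_diag n (f : 'rV[R]_n -> R) (rho : 'M[C]_n) m (p : 'I_m -> R) psi :
  F_sc f -> pure_decomposition rho p psi -> avg_coh f p psi <= f (diag_vec rho).
Proof.
move=> [_ [_ f_concave]] decomp; rewrite (diag_vec_pure_decomposition decomp).
case: decomp => p_gt0 [p_sum [psi_unit _]].
apply: concave_jensen => // [k|k]; first exact: ltW.
split=> [i|]; first by rewrite mxE sqmod_ge0.
by under eq_bigr do rewrite mxE; apply: psi_unit.
Qed.

(** * Decompositions attaining the bound *)

Definition uniform_decomposable n (A : 'M[C]_n) (d : 'I_n -> R) :=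
  exists m (p : 'I_m -> R) (psi : 'I_m -> 'cV[C]_n),
    pure_decomposition A p psi /\ forall k i, sqmod (psi k i ord0) = d i.

Lemma uniform_decomposable_rank1 n (psi : 'cV[C]_n) (d : 'I_n -> R) :
  unit_vector psi -> (forall i, sqmod (psi i ord0) = d i) ->
  uniform_decomposable (psi *m adjmx psi) d.
Proof.
move=> psi_unit psi_d; exists 1%N, (fun=> 1), (fun=> psi).
by do !split=> //; rewrite big_ord1 // scale1r.
Qed.

Lemma split_lshift m1 m2 (i : 'I_m1) : split (lshift m2 i) = inl i.
Proof. exact: (unsplitK (inl i)). Qed.

Lemma split_rshift m1 m2 (i : 'I_m2) : split (rshift m1 i) = inr i.
Proof. exact: (unsplitK (inr i)). Qed.

Lemma uniform_decomposable_mix n (A B : 'M[C]_n) (d : 'I_n -> R) (t : R) :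
  0 <= t <= 1 -> uniform_decomposable A d -> uniform_decomposable B d ->
  uniform_decomposable (t%:C *: A + (1 - t)%:C *: B) d.
Proof.
move=> /andP[t_ge0 t_le1] [m1 [p1 [psi1 [[p1_gt0 [p1_sum [psi1_unit ->]]] psi1_d]]]]
  [m2 [p2 [psi2 [[p2_gt0 [p2_sum [psi2_unit ->]]] psi2_d]]]].
have [->|t_neq0] := eqVneq t 0.
  by rewrite scale0r add0r subr0 scale1r; exists m2, p2, psi2.
have [->|t_neq1] := eqVneq t 1.
  by rewrite subrr scale0r addr0 scale1r; exists m1, p1, psi1.
have t_gt0 : 0 < t by rewrite lt_neqAle eq_sym t_neq0.
have t'_gt0 : 0 < 1 - t by rewrite subr_gt0 lt_neqAle t_neq1.
exists (m1 + m2)%N,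
  (fun k => match split k with inl i => t * p1 i | inr j => (1 - t) * p2 j end),
  (fun k => match split k with inl i => psi1 i | inr j => psi2 j end).
split; last by move=> k i; case: (split k).
split; first by move=> k; case: (split k) => i; apply: mulr_gt0.
split.
  rewrite big_split_ord /=.
  under eq_bigr do rewrite split_lshift.
  under [X in _ + X]eq_bigr do rewrite split_rshift.
  by rewrite -!mulr_sumr p1_sum p2_sum !mulr1 addrC subrK.
split; first by move=> k; case: (split k).
rewrite !scaler_sumr big_split_ord /=; congr (_ + _); apply: eq_bigr => i _.
  by rewrite split_lshift scalerA rmorphM.
by rewrite split_rshift scalerA rmorphM.
Qed.

Lemma avg_coh_uniform n (f : 'rV[R]_n -> R) (rho : 'M[C]_n) :
  uniform_decomposable rho (fun i => complex.Re (rho i i)) ->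
  exists m (p : 'I_m -> R) (psi : 'I_m -> 'cV[C]_n),
    pure_decomposition rho p psi /\ avg_coh f p psi = f (diag_vec rho).
Proof.
move=> [m [p [psi [decomp psi_diag]]]]; exists m, p, psi; split=> //.
have coh_psi k : coh f (psi k) = f (diag_vec rho).
  by congr f; apply/matrixP => i j; rewrite !mxE psi_diag.
rewrite /avg_coh; under eq_bigr do rewrite coh_psi.
by rewrite -mulr_suml; case: decomp => _ [-> _]; rewrite mul1r.
Qed.

(** * Reduction to correlation matrices *)

Definition rdiag n (s : 'I_n -> R) : 'M[C]_n := diag_mx (\row_i (s i)%:C).

Lemma rdiagE n (s : 'I_n -> R) i j : rdiag s i j = (s i)%:C *+ (i == j).
Proof. by rewrite !mxE. Qed.

Lemma rdiag_congrE n (s e : 'I_n -> R) (A : 'M[C]_n) i j :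
  (rdiag s *m A *m rdiag e) i j = (s i)%:C * A i j * (e j)%:C.
Proof. by rewrite mul_mx_diag mul_diag_mx !mxE. Qed.

Lemma adjmxM m n k (A : 'M[C]_(m, n)) (B : 'M[C]_(n, k)) :
  adjmx (A *m B) = adjmx B *m adjmx A.
Proof. by rewrite /adjmx map_mxM trmx_mul. Qed.

Lemma adjmxD m n (A B : 'M[C]_(m, n)) : adjmx (A + B) = adjmx A + adjmx B.
Proof. by rewrite /adjmx map_mxD linearD. Qed.

Lemma adjmxZ m n (x : C) (A : 'M[C]_(m, n)) : adjmx (x *: A) = x^* *: adjmx A.
Proof. by apply/matrixP => k l; rewrite !mxE rmorphM. Qed.

Lemma adjmx_rdiag n (s : 'I_n -> R) : adjmx (rdiag s) = rdiag s.
Proof.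
apply/matrixP => i j; rewrite !mxE eq_sym.
by case: eqP => [->|_]; rewrite ?mulr1n ?mulr0n ?conjc_real ?conjc0.
Qed.

Lemma adjmx_delta n (i : 'I_n) : adjmx (delta_mx i 0 : 'cV[C]_n) = delta_mx 0 i.
Proof.
apply/matrixP => k l; rewrite !mxE andbC.
by case: (_ && _); rewrite ?conjc0 ?conjc1.
Qed.

Lemma hermitianE m (A : 'M[C]_m) i j : adjmx A = A -> A j i = (A i j)^*.
Proof. by move/matrixP/(_ j i); rewrite !mxE => <-. Qed.

Definition psd_mx n (A : 'M[C]_n) :=
  forall v : 'cV[C]_n, 0 <= (adjmx v *m A *m v) ord0 ord0.

Lemma psd_mx_gram m n (B : 'M[C]_(m, n)) : psd_mx (adjmx B *m B).
Proof.
move=> v; rewrite !mulmxA -adjmxM -mulmxA mxE sumr_ge0 // => i _.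
by rewrite !mxE mulrC mulcJ_ge0.
Qed.

Lemma psd_mxD n (A B : 'M[C]_n) : psd_mx A -> psd_mx B -> psd_mx (A + B).
Proof. by move=> psdA psdB v; rewrite mulmxDr mulmxDl mxE addr_ge0. Qed.

Lemma psd_mx_congr n (A B : 'M[C]_n) : psd_mx A -> psd_mx (adjmx B *m A *m B).
Proof. by move=> psdA v; rewrite !mulmxA -adjmxM -!mulmxA mulmxA psdA. Qed.

Lemma delta_congrE n (A : 'M[C]_n) (i j : 'I_n) :
  delta_mx (ord0 : 'I_1) i *m A *m delta_mx j (ord0 : 'I_1) = (A i j)%:M.
Proof. by apply/matrixP => k l; rewrite -rowE -colE !ord1 !mxE. Qed.

Lemma quad_formE n (A : 'M[C]_n) (v : 'cV[C]_n) :
  (adjmx v *m A *m v) ord0 ord0 = \sum_i \sum_j (v i ord0)^* * A i j * v j ord0.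
Proof.
rewrite mxE; under eq_bigr do rewrite mxE mulr_suml.
by rewrite exchange_big; apply: eq_bigr => i _; apply: eq_bigr => j _; rewrite !mxE.
Qed.

Lemma psd_mx_diag_ge0 n (A : 'M[C]_n) i : psd_mx A -> 0 <= A i i.
Proof. by move/(_ (delta_mx i 0)); rewrite adjmx_delta delta_congrE mxE. Qed.

Lemma psd_mx_pairE n (A : 'M[C]_n) (i j : 'I_n) (x : C) :
  let v : 'cV[C]_n := x *: delta_mx i 0 + delta_mx j 0 in
  (adjmx v *m A *m v) ord0 ord0 = x^* * x * A i i + x^* * A i j + x * A j i + A j j.
Proof.
rewrite /= adjmxD adjmxZ !adjmx_delta !mulmxDl !mulmxDr -!scalemxAl -!scalemxAr.
rewrite !delta_congrE !mxE /=; ring.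
Qed.

Lemma affine_bound_eq0 (d K : R) : 0 <= K -> (forall t, 0 <= d - t * K) -> K = 0.
Proof.
move=> K_ge0 bound; apply/eqP; apply: contraT => K_neq0.
have := bound ((d + 1) / K); rewrite mulfVK //; lra.
Qed.

Lemma psd_mx_entry_eq0 n (A : 'M[C]_n) i j :
  adjmx A = A -> psd_mx A -> A i i = 0 -> A i j = 0.
Proof.
move=> hermA psdA Aii0; apply: sqmod_eq0.
suff : 2 * sqmod (A i j) = 0 by lra.
apply: (affine_bound_eq0 (d := complex.Re (A j j))); first by rewrite mulr_ge0 ?sqmod_ge0.
move=> t; move: (psdA (- (t%:C * A i j) *: delta_mx i 0 + delta_mx j 0)).
rewrite psd_mx_pairE (hermitianE i j hermA) Aii0 lecE => /andP[_].
by move: (A j j) (A i j) => [d1 d2] [a1 a2]; rewrite /sqmod; simpc; rewrite /=; lra.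
Qed.

Inductive unimodular_hull n : 'M[C]_n -> Prop :=
| UHull_rank1 (x : 'cV[C]_n) of (forall i, sqmod (x i ord0) = 1) :
    unimodular_hull (x *m adjmx x)
| UHull_mix (A B : 'M[C]_n) (t : R) of 0 <= t <= 1 &
    unimodular_hull A & unimodular_hull B :
    unimodular_hull (t%:C *: A + (1 - t)%:C *: B).

Lemma rdiag_congr_uniform n (s d : 'I_n -> R) (G : 'M[C]_n) :
  (forall i, s i ^+ 2 = d i) -> \sum_i d i = 1 -> unimodular_hull G ->
  uniform_decomposable (rdiag s *m G *m rdiag s) d.
Proof.
move=> sd d_sum; elim=> {G} [x x_unimod | A B t t01 _ decA _ decB].
  have psi_sqmod i : sqmod ((rdiag s *m x) i ord0) = d i.
    by rewrite mul_diag_mx !mxE sqmod_realM x_unimod mulr1.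
  rewrite mulmxA -{2}adjmx_rdiag -mulmxA -adjmxM.
  apply: uniform_decomposable_rank1 => //.
  by rewrite /unit_vector; under eq_bigr do rewrite psi_sqmod.
rewrite mulmxDr mulmxDl -!scalemxAr -!scalemxAl.
exact: uniform_decomposable_mix.
Qed.

Definition correlation_mx n (G : 'M[C]_n) :=
  [/\ adjmx G = G, psd_mx G & forall i, G i i = 1].

Section CorrelationOfPsd.
Variables (n : nat) (rho : 'M[C]_n).
Hypotheses (rho_herm : adjmx rho = rho) (rho_psd : psd_mx rho).

Definition sqrt_diag (i : 'I_n) : R := Num.sqrt (complex.Re (rho i i)).

Let s := sqrt_diag.

(* [(s i)^-1] is [0] when [s i = 0]; the second summand then puts the missing
   [1] on the diagonal. *)
Definition corr_mx : 'M[C]_n :=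
  rdiag (fun i => (s i)^-1) *m rho *m rdiag (fun i => (s i)^-1)
  + rdiag (fun i => (s i == 0)%:R).

Lemma psd_diagE i : rho i i = (s i ^+ 2)%:C.
Proof.
have := psd_mx_diag_ge0 i rho_psd; rewrite lecE /= => /andP[/eqP Im0 Re_ge0].
by rewrite /s /sqrt_diag sqr_sqrtr //; case: (rho i i) Im0 => ? ? /= ->.
Qed.

Lemma corr_mxE i j :
  corr_mx i j = (s i)^-1%:C * rho i j * (s j)^-1%:C + (s i == 0)%:R%:C *+ (i == j).
Proof. by rewrite mxE rdiag_congrE rdiagE. Qed.

Lemma corr_mx_correlation : correlation_mx corr_mx.
Proof.
split.
- by rewrite /corr_mx adjmxD !adjmxM !adjmx_rdiag rho_herm mulmxA.
- apply: psd_mxD; first by rewrite -{1}adjmx_rdiag; apply: psd_mx_congr.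
  have -> : rdiag (fun i => (s i == 0)%:R) =
            adjmx (rdiag (fun i => (s i == 0)%:R)) *m rdiag (fun i => (s i == 0)%:R).
    apply/matrixP => i j; rewrite adjmx_rdiag mul_diag_mx !mxE.
    by case: (s i == 0); case: (i == j); rewrite ?mulr1n ?mulr0n ?mul1r ?mul0r.
  exact: psd_mx_gram.
- move=> i; rewrite corr_mxE eqxx mulr1n psd_diagE.
  have [->|s_neq0] := eqVneq (s i) 0; first by rewrite invr0 !mul0r add0r.
  rewrite addr0 -!rmorphM /= expr2 mulrA mulVf // mul1r mulfV //.
Qed.

Lemma corr_mx_congr : rdiag s *m corr_mx *m rdiag s = rho.
Proof.
apply/matrixP => i j; rewrite rdiag_congrE corr_mxE.
have [si0|si_neq0] := eqVneq (s i) 0.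
  by rewrite si0 mul0r psd_mx_entry_eq0 ?mul0r // psd_diagE si0 expr0n.
have [sj0|sj_neq0] := eqVneq (s j) 0.
  rewrite sj0 mulr0 (hermitianE j i rho_herm) psd_mx_entry_eq0 ?conjc0 //.
  by rewrite psd_diagE sj0 expr0n.
rewrite [X in _ + X](_ : _ = 0) ?addr0; last by case: (i == j).
rewrite !fmorphV; field.
by rewrite !fmorph_eq0 si_neq0 sj_neq0.
Qed.

End CorrelationOfPsd.

Lemma density_uniform_decomposable n (rho : 'M[C]_n) :
  density_matrix rho -> unimodular_hull (corr_mx rho) ->
  uniform_decomposable rho (fun i => complex.Re (rho i i)).
Proof.
case=> herm [psd tr1] hull; rewrite -{1}(corr_mx_congr herm psd).
apply: rdiag_congr_uniform hull => [i|]; first by rewrite (psd_diagE psd).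
by rewrite -Re_sum; move: tr1; rewrite /mxtrace => ->.
Qed.

(** * Correlation matrices of order two and three *)

Lemma unit_circle_chord (z e : C) : sqmod z <= 1 -> sqmod e = 1 ->
  exists t s1 s2, [/\ 0 <= t <= 1, sqmod (z + s1%:C * e) = 1,
    sqmod (z + s2%:C * e) = 1 & t * s1 + (1 - t) * s2 = 0].
Proof.
case: z e => [z1 z2] [e1 e2]; rewrite /sqmod /= => hz he.
set r := z1 * e1 + z2 * e2.
set dd := r ^+ 2 + 1 - (z1 ^+ 2 + z2 ^+ 2).
have dd_ge0 : 0 <= dd by rewrite /dd; nra.
set sq := Num.sqrt dd.
have sq2 : sq ^+ 2 = dd by rewrite /sq sqr_sqrtr.
have sq_ge0 : 0 <= sq by rewrite /sq sqrtr_ge0.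
have on_circle s : s = - r - sq \/ s = - r + sq ->
    (z1 + (s * e1 - 0 * e2)) ^+ 2 + (z2 + (s * e2 + 0 * e1)) ^+ 2 = 1.
  move=> hs; rewrite !mul0r subr0 addr0.
  have -> : (z1 + s * e1) ^+ 2 + (z2 + s * e2) ^+ 2
      = (z1 ^+ 2 + z2 ^+ 2) + 2 * s * r + s ^+ 2 * (e1 ^+ 2 + e2 ^+ 2) by rewrite /r; ring.
  by rewrite he; case: hs => ->; rewrite /dd in sq2; nra.
exists (if sq == 0 then 1 else (sq - r) / (2 * sq)), (- r - sq), (- r + sq).
have [sq0|sq_neq0] := eqVneq sq 0.
  have r0 : r = 0 by rewrite sq0 /dd in sq2; nra.
  split; [lra | exact: on_circle (or_introl _) | exact: on_circle (or_intror _) |].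
  by rewrite sq0 r0; ring.
have sq_gt0 : 0 < sq by rewrite lt_neqAle eq_sym sq_neq0.
have r_bound : - sq <= r <= sq by apply/andP; split; rewrite /dd in sq2; nra.
split; [| exact: on_circle (or_introl _) | exact: on_circle (or_intror _) | by field].
apply/andP; split; first by rewrite divr_ge0 //; lra.
by rewrite ler_pdivrMr; lra.
Qed.

Lemma unit_disk_convex (y : C) : sqmod y <= 1 ->
  exists r (w1 w2 : C), [/\ 0 <= r <= 1, sqmod w1 = 1, sqmod w2 = 1 &
    y = r%:C * w1 + (1 - r)%:C * w2].
Proof.
move=> hy; have unit1 : sqmod (1 : C) = 1 by rewrite /sqmod /=; ring.
have [r [s1 [s2 [r01 h1 h2 hrs]]]] := unit_circle_chord hy unit1.
exists r, (y + s1%:C * 1), (y + s2%:C * 1); split=> //.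
rewrite !mulr1 -[y in LHS]addr0 -(rmorph0 (real_complex R)) -hrs.
by rewrite !rmorphD !rmorphM rmorphB /=; ring.
Qed.

Lemma exists_unit_orthogonal (u : C) :
  exists e : C, sqmod e = 1 /\ complex.Re (u * e) = 0.
Proof.
have [u0|u_neq0] := eqVneq (sqmod u) 0.
  by exists 1; rewrite sqmod_real expr1n (sqmod_eq0 u0) mul0r.
have [nu nu2 nu_neq0] : exists2 nu : R, nu ^+ 2 = sqmod u & nu != 0.
  exists (Num.sqrt (sqmod u)); first by rewrite sqr_sqrtr // sqmod_ge0.
  by rewrite sqrtr_eq0 -ltNge lt_neqAle eq_sym u_neq0 sqmod_ge0.
case: u nu2 {u_neq0} => u1 u2 nu2.
exists ((u2 / nu) +i* (u1 / nu)); split; last by rewrite /=; field.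
rewrite /sqmod /= in nu2 *; rewrite !expr_div_n -mulrDl addrC -nu2 divff //.
by rewrite expf_neq0.
Qed.

Lemma ord2P (i : 'I_2) : i = ord0 \/ i = ord_max.
Proof. by case: i => [[|[|k]] hk]; [left | right | by []]; apply: val_inj. Qed.

Definition corr2 (a : C) : 'M[C]_2 :=
  \matrix_(i, j) if i == j then 1 else if i == ord0 then a else a^*.

Lemma correlation2E (G : 'M[C]_2) : correlation_mx G -> G = corr2 (G ord0 ord_max).
Proof.
case=> herm _ diag1; apply/matrixP => i j; rewrite !mxE.
by case: (ord2P i) => ->; case: (ord2P j) => -> //=; rewrite (hermitianE _ _ herm).
Qed.

Lemma corr2_mix (t : R) (a1 a2 : C) :
  corr2 (t%:C * a1 + (1 - t)%:C * a2) = t%:C *: corr2 a1 + (1 - t)%:C *: corr2 a2.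
Proof.
apply/matrixP => i j; rewrite !mxE.
by case: (ord2P i) => ->; case: (ord2P j) => -> /=; rewrite ?conjc_comb ?real_comb1.
Qed.

Lemma corr2_unimodular (w : C) : sqmod w = 1 ->
  corr2 w = \col_(i < 2) (if i == ord0 then 1 else w^*)
    *m adjmx (\col_(i < 2) (if i == ord0 then 1 else w^*)).
Proof.
case: w => w1 w2; rewrite /sqmod /= expr2 [w2 ^+ 2]expr2 => w_unit.
apply/matrixP => i j; rewrite !mxE big_ord1 !mxE.
by case: (ord2P i) => ->; case: (ord2P j) => -> /=; simpc;
  apply/eqP; rewrite eq_complex /= ?w_unit; apply/andP; split; apply/eqP; ring.
Qed.

Lemma corr2_hull_unimodular (w : C) : sqmod w = 1 -> unimodular_hull (corr2 w).
Proof.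
move=> w_unit; rewrite corr2_unimodular //; apply: UHull_rank1 => i; rewrite mxE.
by case: (_ == _); rewrite ?sqmod_conj // sqmod_real expr1n.
Qed.

Lemma correlation2_hull (G : 'M[C]_2) : correlation_mx G -> unimodular_hull G.
Proof.
move=> corrG; have [herm psdG diag1] := corrG.
rewrite (correlation2E corrG); set a := G ord0 ord_max.
have a_le1 : sqmod a <= 1.
  move: (psdG (- a *: delta_mx ord0 0 + delta_mx ord_max 0)).
  rewrite psd_mx_pairE !diag1 (hermitianE ord0 ord_max herm) -/a lecE => /andP[_].
  by rewrite /sqmod; case: a => a1 a2; simpc; rewrite /=; lra.
have [r [w1 [w2 [r01 w1_unit w2_unit ->]]]] := unit_disk_convex a_le1.
by rewrite corr2_mix; apply: UHull_mix => //; apply: corr2_hull_unimodular.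
Qed.

Definition ord3_1 : 'I_3 := Ordinal (isT : (1 < 3)%N).

Lemma ord3P (i : 'I_3) : [\/ i = ord0, i = ord3_1 | i = ord_max].
Proof.
by case: i => [[|[|[|k]]] hk]; [apply: Or31 | apply: Or32 | apply: Or33 | by []];
  apply: val_inj.
Qed.

Definition corr3 (a b c : C) : 'M[C]_3 := \matrix_(i, j)
  if i == j then 1
  else if i == ord0 then (if j == ord3_1 then a else b)
  else if j == ord0 then (if i == ord3_1 then a^* else b^*)
  else if i == ord3_1 then c else c^*.

Lemma correlation3E (G : 'M[C]_3) : correlation_mx G ->
  G = corr3 (G ord0 ord3_1) (G ord0 ord_max) (G ord3_1 ord_max).
Proof.
case=> herm _ diag1; apply/matrixP => i j; rewrite !mxE.
by case: (ord3P i) => ->; case: (ord3P j) => -> //=; rewrite (hermitianE _ _ herm).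
Qed.

Lemma corr3_mix (t : R) (a1 a2 b1 b2 c1 c2 : C) :
  corr3 (t%:C * a1 + (1 - t)%:C * a2) (t%:C * b1 + (1 - t)%:C * b2)
        (t%:C * c1 + (1 - t)%:C * c2)
  = t%:C *: corr3 a1 b1 c1 + (1 - t)%:C *: corr3 a2 b2 c2.
Proof.
apply/matrixP => i j; rewrite !mxE.
by case: (ord3P i) => ->; case: (ord3P j) => -> /=; rewrite ?conjc_comb ?real_comb1.
Qed.

Lemma corr3_unimodular (x w : C) : sqmod x = 1 -> sqmod w = 1 ->
  corr3 x^* w (x * w)
    = \col_(i < 3) (if i == ord0 then 1 else if i == ord3_1 then x else w^*)
    *m adjmx (\col_(i < 3) (if i == ord0 then 1 else if i == ord3_1 then x else w^*)).
Proof.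
case: x w => [x1 x2] [w1 w2]; rewrite /sqmod /= !expr2 => x_unit w_unit.
apply/matrixP => i j; rewrite !mxE big_ord1 !mxE.
by case: (ord3P i) => ->; case: (ord3P j) => -> /=; simpc;
  apply/eqP; rewrite eq_complex /= ?x_unit ?w_unit; apply/andP; split; apply/eqP; ring.
Qed.

Lemma corr3_hull_unimodular (x w : C) : sqmod x = 1 -> sqmod w = 1 ->
  unimodular_hull (corr3 x^* w (x * w)).
Proof.
move=> x_unit w_unit; rewrite corr3_unimodular //; apply: UHull_rank1 => i.
rewrite mxE; case: (_ == _); last case: (_ == _).
all: by rewrite ?sqmod_conj // sqmod_real expr1n.
Qed.

Lemma corr3_hull_disk (x y : C) : sqmod x = 1 -> sqmod y <= 1 ->
  unimodular_hull (corr3 x^* y (x * y)).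
Proof.
move=> x_unit /unit_disk_convex[r [w1 [w2 [r01 w1_unit w2_unit ->]]]].
rewrite -{1}(real_comb1 r x^*) mulrDr (mulrCA x _ w1) (mulrCA x _ w2) corr3_mix.
by apply: UHull_mix => //; apply: corr3_hull_unimodular.
Qed.

Definition corr3_form (a b c x y z : C) : R :=
  sqmod x + sqmod y + sqmod z
  + 2 * complex.Re (x^* * a * y + x^* * b * z + y^* * c * z).

Lemma psd_corr3_form (a b c : C) : psd_mx (corr3 a b c) ->
  forall x y z, 0 <= corr3_form a b c x y z.
Proof.
move=> psd3 x y z.
move: (psd3 (\col_(i < 3) (if i == ord0 then x else if i == ord3_1 then y else z))).
rewrite quad_formE lecE => /andP[_].
rewrite !big_ord_recl !big_ord0 !mxE /= /corr3_form /sqmod.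
clear psd3; case: a b c x y z => [a1 a2] [b1 b2] [c1 c2] [x1 x2] [y1 y2] [z1 z2].
by simpc; rewrite /=; lra.
Qed.

Lemma corr3_hull_boundary (a b c : C) : sqmod a = 1 -> psd_mx (corr3 a b c) ->
  unimodular_hull (corr3 a b c).
Proof.
move=> a_unit /psd_corr3_form form_ge0.
have b_le1 : sqmod b <= 1.
  have := form_ge0 (- b) 0 1; rewrite /corr3_form /sqmod; clear form_ge0.
  by case: a b c {a_unit} => [a1 a2] [b1 b2] [c1 c2]; simpc; rewrite /=; lra.
have b_eq : b = a * c.
  apply/eqP; rewrite -subr_eq0; apply/eqP/sqmod_eq0.
  suff : 2 * sqmod (b - a * c) = 0 by lra.
  apply: (affine_bound_eq0 (d := 1)); first by rewrite mulr_ge0 ?sqmod_ge0.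
  move=> t; have := form_ge0 (- (t%:C * (b - a * c))) (t%:C * a^* * (b - a * c)) 1.
  have -> : corr3_form a b c (- (t%:C * (b - a * c))) (t%:C * a^* * (b - a * c)) 1
    = 1 - t * (2 * sqmod (b - a * c)) + t ^+ 2 * sqmod (b - a * c) * (1 - sqmod a).
    rewrite /corr3_form /sqmod; clear form_ge0 b_le1 a_unit.
    by case: a b c => [a1 a2] [b1 b2] [c1 c2]; simpc; rewrite /=; ring.
  by rewrite a_unit subrr mulr0 addr0.
have c_eq : c = a^* * b.
  by rewrite b_eq mulrA (mulrC a^*) mulcJ_sqmod a_unit mul1r.
rewrite c_eq -{1}(conjcK a); apply: corr3_hull_disk => //.
by rewrite sqmod_conj.
Qed.

Lemma sqmod_affine_le1 (p q a e : C) (s : R) :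
  sqmod (a + s%:C * e) = 1 -> complex.Re (p^* * q * e) = 0 ->
  0 <= 1 - sqmod p - sqmod q - 2 * complex.Re (p^* * q * a) ->
  sqmod (p + q * (a + s%:C * e)) <= 1.
Proof.
move=> w_unit orth L_ge0.
have -> : sqmod (p + q * (a + s%:C * e))
    = 1 + sqmod q * (sqmod (a + s%:C * e) - 1) + 2 * s * complex.Re (p^* * q * e)
      - (1 - sqmod p - sqmod q - 2 * complex.Re (p^* * q * a)).
  rewrite /sqmod; clear w_unit orth L_ge0.
  by case: p q a e => [p1 p2] [q1 q2] [a1 a2] [e1 e2]; simpc; rewrite /=; ring.
by rewrite w_unit orth subrr !mulr0 addr0; lra.
Qed.

Lemma corr3_split (t : R) (a p q w1 w2 : C) : sqmod w1 = 1 -> sqmod w2 = 1 ->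
  a = t%:C * w1 + (1 - t)%:C * w2 ->
  corr3 a (p + q * a) (p * a^* + q) =
    t%:C *: corr3 w1^*^* (p + q * w1) (w1^* * (p + q * w1))
    + (1 - t)%:C *: corr3 w2^*^* (p + q * w2) (w2^* * (p + q * w2)).
Proof.
have unitE w : sqmod w = 1 -> w^* * (p + q * w) = p * w^* + q.
  move=> w_unit; rewrite mulrDr mulrCA (mulrC w^* w) mulcJ_sqmod w_unit.
  by rewrite mulr1 (mulrC w^* p).
move=> w1_unit w2_unit a_eq.
have aJ : p * a^* = p * (t%:C * w1^* + (1 - t)%:C * w2^*).
  by rewrite a_eq; congr (_ * _); apply: conjc_comb.
rewrite aJ a_eq !conjcK -corr3_mix !unitE //.
by congr corr3; rewrite rmorphB rmorph1; ring.
Qed.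

Lemma corr3_hull_interior (a b c : C) : sqmod a < 1 -> psd_mx (corr3 a b c) ->
  unimodular_hull (corr3 a b c).
Proof.
move=> a_lt1 /psd_corr3_form form_ge0.
have D_neq0 : 1 - a * a^* != 0.
  rewrite mulcJ_sqmod -(rmorph1 (real_complex R)) -rmorphB fmorph_eq0.
  by rewrite subr_eq0 eq_sym lt_eqF.
have [p [q [b_eq c_eq]]] : exists p q, b = p + q * a /\ c = p * a^* + q.
  exists ((b - a * c) / (1 - a * a^*)), ((c - a^* * b) / (1 - a * a^*)).
  by split; field.
have L_ge0 : 0 <= 1 - sqmod p - sqmod q - 2 * complex.Re (p^* * q * a).
  have := form_ge0 (- p) (- q) 1; rewrite b_eq c_eq /corr3_form /sqmod.
  by clear; case: p q a => [p1 p2] [q1 q2] [a1 a2]; simpc; rewrite /=; lra.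
have [e [e_unit e_orth]] := exists_unit_orthogonal (p^* * q).
have [t [s1 [s2 [t01 w1_unit w2_unit ts0]]]] := unit_circle_chord (ltW a_lt1) e_unit.
have a_eq : a = t%:C * (a + s1%:C * e) + (1 - t)%:C * (a + s2%:C * e).
  rewrite !mulrDr addrACA real_comb1 !mulrA -!rmorphM -mulrDl -rmorphD ts0.
  by rewrite mul0r addr0.
rewrite b_eq c_eq (corr3_split _ _ w1_unit w2_unit a_eq).
apply: UHull_mix => //; apply: corr3_hull_disk; rewrite ?sqmod_conj //.
  exact: sqmod_affine_le1.
exact: sqmod_affine_le1.
Qed.

Lemma correlation3_hull (G : 'M[C]_3) : correlation_mx G -> unimodular_hull G.
Proof.
move=> corrG; have [_ psdG _] := corrG.
rewrite (correlation3E corrG) in psdG *; set a := G ord0 ord3_1 in psdG *.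
have [a_unit|a_neq1] := eqVneq (sqmod a) 1; first exact: corr3_hull_boundary.
apply: corr3_hull_interior (psdG); rewrite lt_neqAle a_neq1 /=.
have := psd_corr3_form psdG (- a) 1 0; rewrite /corr3_form /sqmod; clear.
by case: a (G _ _) (G _ _) => [a1 a2] [b1 b2] [c1 c2]; simpc; rewrite /=; lra.
Qed.

End Coherence.

Local Close Scope complex_scope.
Unset Implicit Arguments.

Theorem corollary1 (R : realType) (n : nat) (hn : n = 2%N \/ n = 3%N)
    (f : 'rV[R]_n -> R) (hf : F_sc f)
    (rho : 'M[R[i]]_n) (hrho : density_matrix rho) :
  (forall (m : nat) (p : 'I_m -> R) (psi : 'I_m -> 'cV[R[i]]_n),
      pure_decomposition rho p psi -> avg_coh f p psi <= f (diag_vec rho))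
  /\ (exists (m : nat) (p : 'I_m -> R) (psi : 'I_m -> 'cV[R[i]]_n),
      pure_decomposition rho p psi /\ avg_coh f p psi = f (diag_vec rho)).
Proof.
split=> [m p psi decomp|]; first exact: avg_coh_le_diag hf decomp.
apply: avg_coh_uniform; apply: (density_uniform_decomposable hrho).
have [herm [psd _]] := hrho.
have corr := corr_mx_correlation herm psd.
by case: hn => ?; subst n; [exact: correlation2_hull | exact: correlation3_hull].
Qed.
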